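(* Let $(\mathcal U,\mathcal F)$ be a strongly accessible set system satisfying the commutable property, let $P$ be a maximal solution and $w\in\mathcal U$. Let $S$ be a maximal solution that is not a root and satisfies $\mathrm{parent}'(S)=P$ and $\mathrm{pi}'(S)=w$. Then $w\notin P$, and there exist $R\in\mathrm{restr}(P,w)$ and $s\in R\cap Z$ with $s\neq w$ such that $$S=\mathrm{complete}'\big(\mathrm{complete}'(\{s\},R)|_w\cup\{w\},\ \mathcal U\big).$$
   Context: A set system is $(\mathcal U,\mathcal F)$ with $\mathcal U$ finite, $\mathcal F\subseteq 2^{\mathcal U}$, $\emptyset\in\mathcal F$; $S\in\mathcal F$ is maximal if no $Y\in\mathcal F$ has $S\subsetneq Y$. Strongly accessible: for all $X,Y\in\mathcal F$ with $X\subsetneq Y$ there is $z\in Y\setminus X$ with $X\cup\{z\}\in\mathcal F$. Commutable: for all $X,Y\in\mathcal F$ with $X\ne\emptyset$, $X\subsetneq Y$, $a,b\in Y\setminus X$, if $X\cup\{a\},X\cup\{b\}\in\mathcal F$ then $X\cup\{a,b\}\in\mathcal F$. Elements of $\mathcal U$ are distinct integers. $X^+_A=\{a\in A\setminus X: X\cup\{a\}\in\mathcal F\}$, $X^+=X^+_{\mathcal U}$. $Z=\{x:\{x\}\in\mathcal F\}$, $\mathrm{source}(X)=\min(X\cap Z)$. Layers: for $X\in\mathcal F$, $t\in X\cap Z$: $B_0=\{t\}$, $B_i=B_{i-1}\cup(B_{i-1}^+\cap X)$; for $y\in X\cup X^+$, $\mathrm{lay}^X_t(t)=0$ and for $y\ne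 t$, $\mathrm{lay}^X_t(y)=\min\{i\ge1:y\in B_{i-1}^+\}$; $\mathrm{lay}^X=\mathrm{lay}^X_{\mathrm{source}(X)}$. $\mathrm{choose}'(X,A)$ is the $y\in X^+_A$ minimizing $(\mathrm{lay}^X(y),y)$ lexicographically. $\mathrm{complete}'(X,A)$: while $X^+_A\neq\emptyset$, add $\mathrm{choose}'(X,A)$ to $X$; return $X$. The truncated version $\mathrm{complete}'(X,A)|_w$ runs the same loop but stops as soon as $\mathrm{choose}'(X,A)$ would return $w$, returning the current $X$ (so $w$ is not added). The layered canonical order of a nonempty maximal $S$: $s_1=\mathrm{source}(S)$, $s_{i+1}=\mathrm{choose}'(S[i],S)$ while $S[i]^+_S\ne\emptyset$, with $S[i]=\{s_1,\dots,s_i\}$. Let $j$ be the smallest index with $\mathrm{complete}'(S[j],\mathcal U)=S$; $S$ is a root if $j=1$; otherwise $\mathrm{pi}'(S)=s_j$, $\mathrm{core}'(S)=S[j-1]$ and $\mathrm{parent}'(S)=\mathrm{complete}'(\mathrm{core}'(S),\mathcal U)$. For a maximal solution $P$ and $w\in\mathcal U$, $\mathrm{restr}(P,w)$ is the set of all $R\in\mathcal F$ with $R\subseteq P\cup\{w\}$, $R\neq P$, that are maximal among members of $\mathcal F$ contained in $P\cup\{w\}$. *)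

From mathcomp Require Import all_boot.
Set Implicit Arguments. Unset Strict Implicit. Unset Printing Implicit Defensive.

(* The universe U is modelled as the finite type 'I_n, ordered by the values of
   its elements (any finite set of distinct integers is order-isomorphic to 'I_n
   with n = |U|, and only the order of elements is used). *)

Section SetSystem.
Variable n : nat.
Notation T := ('I_n).
Variable F : {set {set T}}.

Definition strongly_accessible : Prop :=
  forall X Y, X \in F -> Y \in F -> X \proper Y ->
    exists2 z, z \in Y :\: X & z |: X \in F.

Definition commutable : Prop :=
  forall X Y a b, X \in F -> Y \in F -> X != set0 -> X \proper Y ->
    a \in Y :\: X -> b \in Y :\: X -> a |: X \in F -> b |: X \in F ->
    a |: (b |: X) \in F.

Definition maximal (S : {set T}) : Prop :=
  S \in F /\ forall Y, Y \in F -> ~ (S \proper Y).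

Definition plus (X A : {set T}) : {set T} :=
  [set a in A :\: X | a |: X \in F].

Definition Zs : {set T} := [set x | [set x] \in F].

Definition source (X : {set T}) : option T :=
  [pick x in X :&: Zs | [forall y in X :&: Zs, (val x <= val y)%N]].

Definition layerB (t : T) (X : {set T}) (i : nat) : {set T} :=
  iter i (fun B => B :|: (plus B setT :&: X)) [set t].

(* The sets B_i stabilise by i = n, so it suffices to search i in [1, n+1];
   if no such i exists the (irrelevant) default value n+2 is returned. *)
Definition lay (t : T) (X : {set T}) (y : T) : nat :=
  if y == t then 0%N
  else (find (fun i => y \in plus (layerB t X i.-1) setT) (iota 1 n.+1)).+1.

Definition layX (X : {set T}) (y : T) : nat :=
  if source X is Some t then lay t X y else 0%N.

Definition lex_le (X : {set T}) (y z : T) : bool :=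
  (layX X y < layX X z)%N || ((layX X y == layX X z) && (val y <= val z)%N).

Definition choose' (X A : {set T}) : option T :=
  [pick y in plus X A | [forall z in plus X A, lex_le X y z]].

(* complete'(X, A): at most n additions can occur *)
Definition complete' (X A : {set T}) : {set T} :=
  iter n (fun Y => if choose' Y A is Some y then y |: Y else Y) X.

(* truncated complete'(X, A)|_w *)
Definition completeT (X A : {set T}) (w : T) : {set T} :=
  (iter n (fun p : {set T} * bool =>
     if p.2 then p else
     match choose' p.1 A with
     | Some y => if y == w then (p.1, true) else (y |: p.1, false)
     | None => (p.1, true)
     end) (X, false)).1.

Fixpoint canon_aux (S : {set T}) (fuel : nat) (X : {set T}) : seq T :=
  match fuel with
  | 0 => [::]
  | k.+1 => if choose' X S is Some y then y :: canon_aux S k (y |: X) else [::]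
  end.

Definition canon (S : {set T}) : seq T :=
  if source S is Some s then s :: canon_aux S n [set s] else [::].

Definition prefix (S : {set T}) (i : nat) : {set T} :=
  [set x in take i (canon S)].

Definition jidx (S : {set T}) : nat :=
  (find (fun k => complete' (prefix S k.+1) setT == S)
        (iota 0 (size (canon S)))).+1.

Definition is_root (S : {set T}) : bool := jidx S == 1%N.

Definition pi' (S : {set T}) : option T := onth (canon S) (jidx S).-1.

Definition core' (S : {set T}) : {set T} := prefix S (jidx S).-1.

Definition parent' (S : {set T}) : {set T} := complete' (core' S) setT.

Definition restr (P : {set T}) (w : T) : {set {set T}} :=
  [set R in F | [&& R \subset w |: P, R != P &
     [forall Y in F, (Y \subset w |: P) ==> ~~ (R \proper Y)]]].

End SetSystem.

From Pilot Require Import Defs.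
From mathcomp Require Import all_boot.
Set Implicit Arguments. Unset Strict Implicit. Unset Printing Implicit Defensive.

(* Let s_1, s_2, ... be the layered canonical order of S and S[i] its prefixes,
   so that w = s_j and P = complete'(S[j-1], U).  Strong accessibility and the
   commutable property give an exchange property: an element addable to a
   nonempty B in F stays addable to every B' in F with B <= B' <= Y, Y in F.
   Hence layers grow with the set, and along a greedy run the key (lay, value)
   of the chosen element never decreases.  So for i < j and any Y in F
   containing S[j], no element of Y addable to S[i] has a smaller key than s_i:
   outside S it would also be addable to S[j], and completing S[j] to S would
   pick an element of S with a key at most its key.  Thus the greedy run
   inside any such Y is s_2, ..., s_{j-1}, w.  With Y = P this forces w
   outside P (otherwise complete' would add w to S[j-1] first and P would be
   complete'(S[j], U) = S, against the minimality of j); with Y a largest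
   member of F between S[j] and P + w it gives complete'({s_1}, R)|_w = S[j-1]. *)

Lemma iter_extensive_fix (T : finType) (f : {set T} -> {set T}) (X : {set T}) :
  (forall Y : {set T}, Y \subset f Y) -> f (iter #|T| f X) = iter #|T| f X.
Proof.
move=> ext.
have card_grows Y : f Y != Y -> #|Y| < #|f Y|.
  by move=> ne; apply: proper_card; rewrite properEneq eq_sym ne ext.
have grows i : f (iter i f X) != iter i f X -> i < #|f (iter i f X)|.
  elim: i => [|i IH] ne; first exact: leq_ltn_trans (leq0n _) (card_grows _ ne).
  have [E|ne'] := eqVneq (f (iter i f X)) (iter i f X).
    by move: ne; rewrite /= E E eqxx.
  exact: leq_ltn_trans (IH ne') (card_grows _ ne).
apply/eqP; apply: contraT => ne.
by have := leq_trans (grows _ ne) (max_card _); rewrite ltnn.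
Qed.

Lemma ltn_radix n l1 l2 (a b : 'I_n) : l1 < l2 -> l1 * n + a < l2 * n + b.
Proof.
move=> lt; apply: (@leq_trans (l1.+1 * n)); first by rewrite mulSnr ltn_add2l ltn_ord.
by apply: leq_trans (leq_addr _ _); rewrite leq_mul2r lt orbT.
Qed.

Section GreedyCompletion.
Variables (n : nat) (F : {set {set 'I_n}}).
Local Notation T := 'I_n.

Lemma in_plus (X A : {set T}) a :
  (a \in plus F X A) = [&& a \notin X, a \in A & a |: X \in F].
Proof. by rewrite /plus !inE andbA. Qed.

Lemma choose_spec (X A : {set T}) a : choose' F X A = Some a ->
  a \in plus F X A /\ forall z, z \in plus F X A -> lex_le F X a z.
Proof. by rewrite /choose'; case: pickP => // x /andP [xP /forall_inP min] [<-]. Qed.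

Lemma lex_le_antisym (X : {set T}) y z : lex_le F X y z -> lex_le F X z y -> y = z.
Proof.
rewrite /lex_le; case: ltngtP => //= _ yz zy.
by apply: val_inj; apply/eqP; rewrite eqn_leq yz zy.
Qed.

Definition lex_key (X : {set T}) (y : T) : nat := layX F X y * n + val y.

Lemma lex_leE (X : {set T}) y z : lex_le F X y z = (lex_key X y <= lex_key X z).
Proof.
rewrite /lex_le /lex_key; case: ltngtP => [lt|lt|->] /=.
- by rewrite ltnW // ltn_radix.
- by apply/esym/negbTE; rewrite -ltnNge ltn_radix.
- by rewrite leq_add2l.
Qed.

Lemma choose_eq (X A : {set T}) a : a \in plus F X A ->
  (forall z, z \in plus F X A -> lex_le F X a z) -> choose' F X A = Some a.
Proof.
move=> aP amin; rewrite /choose'; case: pickP => [x /andP [xP /forall_inP xmin]|].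
  by congr Some; apply: lex_le_antisym; [apply: xmin | apply: amin].
by move/(_ a); rewrite aP; move/negP; case; apply/forall_inP.
Qed.

Lemma choose_exists (X A : {set T}) z : z \in plus F X A ->
  exists a, choose' F X A = Some a.
Proof.
move=> zP; have [a aP amin] := arg_minnP (lex_key X) zP.
by exists a; apply: choose_eq => // y yP; rewrite lex_leE amin.
Qed.

Local Notation complete_step A :=
  (fun Y => if choose' F Y A is Some y then y |: Y else Y).

Lemma complete_step_ext (A Y : {set T}) : Y \subset complete_step A Y.
Proof. by rewrite /=; case: choose' => [y|]; [apply: subsetU1 | apply: subxx]. Qed.

Lemma complete_fix (X A : {set T}) :
  complete_step A (complete' F X A) = complete' F X A.
Proof. by have := iter_extensive_fix X (@complete_step_ext A); rewrite card_ord. Qed.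

Lemma subset_complete (X A : {set T}) : X \subset complete' F X A.
Proof.
suff sub k : X \subset iter k (complete_step A) X by apply: sub.
by elim: k => [|k IH] //=; apply: subset_trans IH (complete_step_ext _ _).
Qed.

Lemma complete_choose (X A : {set T}) a : choose' F X A = Some a ->
  complete' F (a |: X) A = complete' F X A.
Proof.
move=> E; have -> : a |: X = complete_step A X by rewrite E.
by rewrite /complete' -iterSr /= complete_fix.
Qed.

Lemma mem_complete_choose (X A : {set T}) a : choose' F X A = Some a ->
  a \in complete' F X A.
Proof.
by move=> E; rewrite -(complete_choose E) (subsetP (subset_complete _ _)) ?setU11.
Qed.

Lemma complete_in (X A : {set T}) : X \in F -> complete' F X A \in F.
Proof.
move=> FX; suff inF k : iter k (complete_step A) X \in F by apply: inF.
elim: k => [|k IH] //=; case E: choose' => [y|] //.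
by have [+ _] := choose_spec E; rewrite in_plus => /and3P [].
Qed.

Lemma source_spec (S : {set T}) s : source F S = Some s ->
  [/\ s \in S, [set s] \in F & forall y, y \in S -> [set y] \in F -> val s <= val y].
Proof.
rewrite /source; case: pickP => // x /andP [+ /forall_inP min] [<-].
rewrite !inE => /andP [xS xZ]; split => // y yS yZ.
by apply: min; rewrite !inE yS.
Qed.

Lemma source_subset (S X : {set T}) s : source F S = Some s -> s \in X ->
  X \subset S -> source F X = Some s.
Proof.
move=> /source_spec [sS Fs smin] sX sXS; rewrite /source.
case: pickP => [x /andP [+ /forall_inP xmin]|].
  rewrite !inE => /andP [xX xZ]; congr Some; apply: val_inj; apply/eqP.
  by rewrite eqn_leq smin ?(subsetP sXS) //= xmin // !inE sX.
move/(_ s); rewrite !inE sX Fs /= => /negP []; apply/forall_inP => y.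
by rewrite !inE => /andP [yX yZ]; apply: smin => //; apply: (subsetP sXS).
Qed.

Lemma canon_aux_spec (S : {set T}) x0 k (X : {set T}) :
  let l := canon_aux F S k X in
  (forall m, m < size l ->
     choose' F (X :|: [set x in take m l]) S = Some (nth x0 l m)) /\
  [/\ uniq l, all (fun x => x \notin X) l & all (fun x => x \in S) l].
Proof.
elim: k X => [|k IH] X //=; case E: (choose' F X S) => [y|] //=.
have [chooseP [uniql notinX inS]] := IH (y |: X).
have [+ _] := choose_spec E; rewrite in_plus => /and3P [yX yS _].
split.
  case=> [_|m]; first by rewrite take0 (_ : [set x in [::]] = set0) ?setU0 //; apply/setP.
  rewrite ltnS => /chooseP <-; congr choose'.
  by apply/setP=> x; rewrite !inE orbA [(x == y) || _]orbC.
rewrite yX yS inS uniql /= andbT; split => //.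
  by apply/negP=> /(allP notinX); rewrite setU11.
by apply/allP=> x /(allP notinX); rewrite in_setU1 negb_or => /andP [].
Qed.

Definition truncated_step (A : {set T}) w (p : {set T} * bool) :=
  if p.2 then p else
  match choose' F p.1 A with
  | Some y => if y == w then (p.1, true) else (y |: p.1, false)
  | None => (p.1, true)
  end.

Lemma completeTE (X A : {set T}) w :
  completeT F X A w = (iter n (truncated_step A w) (X, false)).1.
Proof. by []. Qed.

Lemma truncated_step_next (A Y : {set T}) w y : choose' F Y A = Some y -> y != w ->
  truncated_step A w (Y, false) = (y |: Y, false).
Proof. by move=> E yw; rewrite /truncated_step /= E (negbTE yw). Qed.

Lemma truncated_step_hit (A Y : {set T}) w : choose' F Y A = Some w ->
  truncated_step A w (Y, false) = (Y, true).
Proof. by move=> E; rewrite /truncated_step /= E eqxx. Qed.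

Lemma iter_truncated_step_done (A Y : {set T}) w k :
  iter k (truncated_step A w) (Y, true) = (Y, true).
Proof. by elim: k => //= k ->. Qed.

Section CanonicalOrder.
Variables (S : {set T}) (s : T).
Hypothesis sourceS : source F S = Some s.
Local Notation c := (canon F S).
Local Notation Pre := (Defs.prefix F S).

Lemma canonE : c = s :: canon_aux F S n [set s].
Proof. by rewrite /canon sourceS. Qed.

Lemma choose_canon i : 0 < i < size c -> choose' F (Pre i) S = Some (nth s c i).
Proof.
case: i => // m; rewrite canonE /= ltnS => lt.
have [chooseP _] := canon_aux_spec S s n [set s]; rewrite -(chooseP m lt).
by congr choose'; apply/setP=> x; rewrite !inE canonE.
Qed.

Lemma canon_uniq : uniq c.
Proof.
have [_ [uniql notins _]] := canon_aux_spec S s n [set s].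
by rewrite canonE /= uniql andbT; apply/negP=> /(allP notins); rewrite set11.
Qed.

Lemma mem_canon x : x \in c -> x \in S.
Proof.
have [_ [_ _ inS]] := canon_aux_spec S s n [set s].
rewrite canonE in_cons => /orP [/eqP ->|]; last exact: (allP inS).
by have [] := source_spec sourceS.
Qed.

Lemma size_canon : size c <= n.
Proof. by rewrite -(card_uniqP canon_uniq); have := max_card (mem c); rewrite card_ord. Qed.

Lemma prefix1 : Pre 1 = [set s].
Proof. by apply/setP=> x; rewrite !inE canonE /= take0 inE. Qed.

Lemma prefix_sub i : Pre i \subset S.
Proof. by apply/subsetP=> x; rewrite inE => /mem_take /mem_canon. Qed.

Lemma prefixS i : i < size c -> Pre i.+1 = nth s c i |: Pre i.
Proof.
move=> lt; rewrite /Defs.prefix (take_nth s lt); apply/setP=> x.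
by rewrite !inE mem_rcons in_cons.
Qed.

Lemma prefix_mono i k : i <= k -> Pre i \subset Pre k.
Proof. by move=> le; apply/subsetP=> x; rewrite !inE -(take_takel c le) => /mem_take. Qed.

Lemma source_in_prefix i : 0 < i -> s \in Pre i.
Proof. by move=> i0; rewrite (subsetP (prefix_mono i0)) // prefix1 set11. Qed.

Lemma source_prefix i : 0 < i -> source F (Pre i) = Some s.
Proof. by move=> i0; apply: source_subset sourceS (source_in_prefix i0) (prefix_sub i). Qed.

Lemma nth_canon_in_prefix i k : i < k -> i < size c -> nth s c i \in Pre k.
Proof.
move=> ik ic; rewrite inE -(nth_take s ik); apply: mem_nth.
by rewrite size_take_min leq_min ik ic.
Qed.

Lemma prefix_in i : 0 < i <= size c -> Pre i \in F.
Proof.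
case: i => // -[_|i /andP [_ lt]].
  by rewrite prefix1; have [] := source_spec sourceS.
have [+ _] := choose_spec (@choose_canon i.+1 lt).
by rewrite in_plus (prefixS lt) => /and3P [].
Qed.

Lemma jidx_spec w : ~~ is_root F S -> pi' F S = Some w ->
  exists J, [/\ jidx F S = J.+2, J.+2 <= size c, nth s c J.+1 = w,
    complete' F (Pre J.+2) setT = S & complete' F (Pre J.+1) setT != S].
Proof.
rewrite /is_root /pi' /jidx; set found := fun k => _ == S.
set f := find found _ => /= nonroot piw.
have fc : f < size c by rewrite -onthTE piw.
have found_f : found f.
  have := @nth_find _ 0 found (iota 0 (size c)).
  by rewrite has_find size_iota nth_iota //; apply.
have [J fE] : exists J, f = J.+1 by move: nonroot; case: (f) => [|J]; last exists J.
exists J; rewrite -fE; split => //; first exact: onth_nth piw.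
  exact/eqP.
have Jc : J < size c by apply: ltnW; rewrite -fE.
have := @before_find _ 0 found (iota 0 (size c)) J.
by rewrite -/f fE ltnSn nth_iota // add0n => /(_ isT) /negbT.
Qed.

Lemma completeT_prefix (R : {set T}) k : 0 < k < size c ->
  (forall i, 0 < i <= k -> choose' F (Pre i) R = Some (nth s c i)) ->
  completeT F [set s] R (nth s c k) = Pre k.
Proof.
case: k => // k /andP [_ kc] chooseR; set w := nth s c k.+1.
have before m : m <= k ->
    iter m (truncated_step R w) ([set s], false) = (Pre m.+1, false).
  elim: m => [_|m IH lt]; first by rewrite prefix1.
  have mc : m.+1 < size c by apply: leq_ltn_trans lt (ltnW kc).
  rewrite iterS (IH (ltnW lt)) (truncated_step_next (chooseR m.+1 (ltnW lt))) ?(prefixS mc) //.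
  by rewrite /w nth_uniq ?canon_uniq // eqSS (ltn_eqF lt).
have := iterD (n - k.+1) k.+1 (truncated_step R w) ([set s], false).
rewrite subnK; last exact: leq_trans (ltnW kc) size_canon.
rewrite iterS (before k (leqnn k)) /w (truncated_step_hit (chooseR k.+1 (leqnn _))).
by rewrite iter_truncated_step_done completeTE => ->.
Qed.

Lemma source_neq_canon i : 0 < i < size c -> s != nth s c i.
Proof.
move=> ic; have [+ _] := choose_spec (choose_canon ic).
rewrite in_plus => /andP [+ _]; apply: contraNneq => <-.
by rewrite source_in_prefix //; case/andP: ic.
Qed.

End CanonicalOrder.

Lemma pi'_source (S : {set T}) w : pi' F S = Some w -> exists s, source F S = Some s.
Proof. by rewrite /pi' /canon; case: source => [s _|]; [exists s | rewrite onth0n]. Qed.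

Lemma restr_superset (P X : {set T}) w : X \in F -> X \subset w |: P ->
  w \in X -> w \notin P -> exists2 R, R \in restr F P w & X \subset R.
Proof.
move=> FX sXP wX wP.
pose Q R := [&& R \in F, X \subset R & R \subset w |: P].
have QX : Q X by rewrite /Q FX subxx sXP.
have [R /and3P [FR sXR sRP] Rmax] := arg_maxnP (fun R : {set T} => #|R|) QX.
exists R => //; rewrite inE FR sRP /=; apply/andP; split.
  by apply: contraNneq wP => RP; rewrite -RP (subsetP sXR).
apply/forall_inP => Y FY; apply/implyP => sYP; apply/negP => RY.
have := Rmax Y; rewrite /Q FY sYP (subset_trans sXR (proper_sub RY)) => /(_ isT) /=.
by rewrite leqNgt proper_card.
Qed.

End GreedyCompletion.

Section Exchange.
Variables (n : nat) (F : {set {set 'I_n}}).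
Local Notation T := 'I_n.
Hypotheses (accessF : strongly_accessible F) (commF : commutable F).

Lemma addable_superset (B B' Y : {set T}) a :
  B \subset B' -> B' \subset Y -> B \in F -> B' \in F -> Y \in F -> B != set0 ->
  a |: B \in F -> a \in Y -> a \notin B' -> a |: B' \in F.
Proof.
move=> + sB'Y + FB' FY; have [k] := ubnP #|B' :\: B|.
elim: k B => // k IH B ltk sBB' FB B0 FaB aY aB'.
have [<- //|neBB'] := eqVneq B B'.
have BB' : B \proper B' by rewrite properEneq neBB'.
have [z /setDP [zB' zB] FzB] := accessF FB FB' BB'.
have aB : a \notin B by apply: contra aB'; apply: (subsetP sBB').
have BY : B \proper Y by apply: proper_sub_trans BB' sB'Y.
apply: (IH (z |: B)) => //.
- have -> : B' :\: (z |: B) = (B' :\: B) :\ z by rewrite setDDl setUC.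
  by apply: leq_trans (proper_card (properD1 _)) ltk; rewrite !inE zB zB'.
- by rewrite subUset sub1set zB' sBB'.
- by apply/set0Pn; exists z; apply: setU11.
- by apply: commF FB FY B0 BY _ _ FaB FzB; rewrite !inE ?aB ?zB ?aY ?(subsetP sB'Y).
Qed.

Lemma setU_addable (B X D : {set T}) : B \in F -> B != set0 -> B \subset X -> X \in F ->
  D \subset plus F B setT :&: X -> B :|: D \in F.
Proof.
move=> FB B0 sBX FX; have [k] := ubnP #|D|.
elim: k D => // k IH D ltD sD; have [->|[a aD]] := set_0Vmem D; first by rewrite setU0.
have /setIP [+ aX] := subsetP sD a aD; rewrite in_plus => /and3P [aB _ FaB].
have sD' : D :\ a \subset D := subsetDl D [set a].
rewrite -(setD1K aD) setUCA; apply: (@addable_superset B _ X) => //.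
- exact: subsetUl.
- by rewrite subUset sBX (subset_trans sD' (subset_trans sD (subsetIr _ _))).
- by apply: IH; [rewrite (cardsD1 a) aD in ltD | apply: subset_trans sD' sD].
- by rewrite !inE negb_or aB eqxx.
Qed.

Lemma layerBS t (X : {set T}) i :
  layerB F t X i.+1 = layerB F t X i :|: (plus F (layerB F t X i) setT :&: X).
Proof. by []. Qed.

Section Layers.
Variables (t : T) (X : {set T}).
Hypotheses (FX : X \in F) (tX : t \in X) (Ft : [set t] \in F).

Lemma layerB_props i :
  [/\ layerB F t X i \in F, layerB F t X i \subset X & t \in layerB F t X i].
Proof.
elim: i => [|i [FB sBX tB]]; first by rewrite /layerB /= Ft sub1set tX set11.
rewrite layerBS subUset sBX subsetIr in_setU tB; split => //.
by apply: setU_addable FB _ sBX FX (subxx _); apply/set0Pn; exists t.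
Qed.

(* After n steps the layers are stable, and a stable layer strictly inside X
   could still be extended inside X by strong accessibility. *)
Lemma layerB_full : layerB F t X n = X.
Proof.
have [FL sLX _] := layerB_props n.
have fixL : layerB F t X n :|: (plus F (layerB F t X n) setT :&: X) = layerB F t X n.
  have := iter_extensive_fix [set t] (fun B => subsetUl B (plus F B setT :&: X)).
  by rewrite card_ord.
apply/eqP; apply: contraT => neLX.
have LX : layerB F t X n \proper X by rewrite properEneq neLX.
have [z /setDP [zX zL] FzL] := accessF FL FX LX.
by move: (zL); rewrite -{1}fixL !inE (negbTE zL) zX FzL.
Qed.

End Layers.

Lemma layerB_subset t (X X' : {set T}) i : X \in F -> X' \in F -> X \subset X' ->
  t \in X -> [set t] \in F -> layerB F t X i \subset layerB F t X' i.
Proof.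
move=> FX FX' sXX' tX Ft; have tX' := subsetP sXX' t tX.
elim: i => [|i IH] //; rewrite !layerBS.
apply/subsetP=> x /setUP [xB|/setIP [+ xX]]; first by rewrite in_setU (subsetP IH).
rewrite in_plus in_setU in_setI => /and3P [xB _ FxB].
have [xB'|xB'] := boolP (x \in layerB F t X' i) => //=.
have [FB _ tB] := layerB_props FX tX Ft i.
have [FB' sB'X' _] := layerB_props FX' tX' Ft i.
have xX' := subsetP sXX' x xX.
rewrite xX' in_plus xB' in_setT (addable_superset IH sB'X' FB FB' FX') //.
by apply/set0Pn; exists t.
Qed.

Lemma layerB_setU1_unreached t a (X : {set T}) K :
  (forall k, k < K -> a \notin plus F (layerB F t X k) setT) ->
  forall k, k <= K -> layerB F t (a |: X) k = layerB F t X k.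
Proof.
move=> unreached; elim=> [|k IH] // lt; rewrite !layerBS (IH (ltnW lt)).
congr (_ :|: _); apply/setP=> x; rewrite !in_setI in_setU1.
by have [->|] := eqVneq x a; rewrite ?(negbTE (unreached k lt)).
Qed.

Section Lay.
Variables (t : T) (X : {set T}) (y : T).
Hypothesis yt : y != t.
Let reached i := y \in plus F (layerB F t X i.-1) setT.

Lemma layE : lay F t X y = (find reached (iota 1 n.+1)).+1.
Proof. by rewrite /lay (negbTE yt). Qed.

Lemma lay_gt0 : 0 < lay F t X y.
Proof. by rewrite layE. Qed.

Lemma lay_max : lay F t X y <= n.+2.
Proof. by rewrite layE ltnS; have := find_size reached (iota 1 n.+1); rewrite size_iota. Qed.

Lemma lay_le m : 0 < m <= n.+1 -> y \in plus F (layerB F t X m.-1) setT ->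
  lay F t X y <= m.
Proof.
case: m => // m /= mn ym; rewrite layE ltnS leqNgt; apply/negP => lt.
by have := before_find 0 lt; rewrite nth_iota // add1n /reached ym.
Qed.

Lemma lay_reached : lay F t X y <= n.+1 ->
  y \in plus F (layerB F t X (lay F t X y).-1) setT.
Proof.
rewrite layE ltnS => le; have := @nth_find _ 0 reached (iota 1 n.+1).
by rewrite has_find size_iota nth_iota // add1n; apply.
Qed.

Lemma lay_unreached k : 0 < k < lay F t X y ->
  y \notin plus F (layerB F t X k.-1) setT.
Proof.
rewrite layE; case: k => // k /andP [_]; rewrite ltnS => lt.
have kn : k < n.+1.
  by apply: leq_trans lt _; have := find_size reached (iota 1 n.+1); rewrite size_iota.
by have := before_find 0 lt; rewrite nth_iota // add1n /reached => ->.
Qed.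

End Lay.

Lemma lay_addable t y (X A : {set T}) : X \in F -> t \in X -> [set t] \in F ->
  y \in plus F X A -> lay F t X y <= n.+1.
Proof.
move=> FX tX Ft; rewrite in_plus => /and3P [yX _ FyX].
have yt : y != t by apply: contraNneq yX => ->.
apply: (lay_le yt); first exact: leqnn.
by rewrite layerB_full // in_plus yX FyX in_setT.
Qed.

Lemma lay_superset t b (X X' Y : {set T}) : X \in F -> X' \in F -> Y \in F ->
  X \subset X' -> X' \subset Y -> t \in X -> [set t] \in F -> b \in Y -> b \notin X' ->
  lay F t X' b <= lay F t X b.
Proof.
move=> FX FX' FY sXX' sX'Y tX Ft bY bX'.
have tX' := subsetP sXX' t tX.
have bt : b != t by apply: contraNneq bX' => ->.
have [->|lt] := eqVneq (lay F t X b) n.+2; first exact: lay_max.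
have le : lay F t X b <= n.+1 by rewrite -ltnS ltn_neqAle lt lay_max.
set m := lay F t X b in lt le *.
have m0 : 0 < m := lay_gt0 X bt.
apply: lay_le => //; first by rewrite m0 le.
have [FB sBX tB] := layerB_props FX tX Ft m.-1.
have [FB' sB'X' _] := layerB_props FX' tX' Ft m.-1.
have := lay_reached bt le; rewrite -/m !in_plus !in_setT => /andP [bB FbB].
have bB' : b \notin layerB F t X' m.-1 by apply: contra bX'; apply: (subsetP sB'X').
rewrite bB' (addable_superset (layerB_subset m.-1 FX FX' sXX' tX Ft)
  (subset_trans sB'X' sX'Y)) //.
by apply/set0Pn; exists t.
Qed.

(* If b is reached no later than a, the layers of X and a |: X agree up to
   that point, so b was already a candidate at X and a was preferred to it. *)
Lemma lex_key_choose_step t (X Y : {set T}) a b : X \in F -> Y \in F -> X \subset Y ->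
  source F X = Some t -> source F (a |: X) = Some t ->
  choose' F X Y = Some a -> b \in plus F (a |: X) Y ->
  lex_key F X a <= lex_key F (a |: X) b.
Proof.
move=> FX FY sXY srcX srcaX chooseA bP.
have [tX Ft _] := source_spec srcX.
have [aP amin] := choose_spec chooseA.
move: (aP) (bP); rewrite !in_plus => /and3P [aX _ _] /and3P [+ bY _].
rewrite in_setU1 negb_or => /andP [_ bX].
have neq_at : a != t by apply: contraNneq aX => ->.
have neq_bt : b != t by apply: contraNneq bX => ->.
rewrite /lex_key /layX srcX srcaX.
set L := lay F t X a; set m := lay F t (a |: X) b.
have Ln : L <= n.+1 := lay_addable FX tX Ft aP.
have [Lm|mL] := ltnP L m.
  exact/ltnW/ltn_radix.
have m0 : 0 < m := lay_gt0 _ neq_bt.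
have bm := lay_reached neq_bt (leq_trans mL Ln); rewrite -/m in bm.
rewrite (@layerB_setU1_unreached _ _ _ L.-1) in bm; first last.
- by rewrite -!subn1 leq_sub2r.
- by move=> k lt; apply: (lay_unreached neq_at (k := k.+1)); rewrite -ltn_predRL.
have [FB sBX tB] := layerB_props FX tX Ft m.-1.
have bXY : b \in plus F X Y.
  move: bm; rewrite !in_plus bX bY in_setT /= => /andP [bB FbB].
  by apply: (addable_superset sBX sXY) => //; apply/set0Pn; exists t.
have := amin b bXY; rewrite lex_leE /lex_key /layX srcX => /leq_trans; apply.
by rewrite leq_add2r leq_mul2r (lay_le neq_bt _ bm) ?orbT // m0 (leq_trans mL Ln).
Qed.

Section CanonicalKeys.
Variables (S : {set T}) (s : T).
Hypotheses (FS : S \in F) (sourceS : source F S = Some s).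
Local Notation c := (canon F S).
Local Notation Pre := (Defs.prefix F S).

Lemma canon_key_chain i k b : 0 < i < k -> k <= size c -> b \in plus F (Pre k) S ->
  lex_key F (Pre i) (nth s c i) <= lex_key F (Pre k) b.
Proof.
case/andP=> i0; elim: k b => // k IH b ik kc.
have k0 : 0 < k := leq_trans i0 ik.
have ck : 0 < k < size c by rewrite k0 kc.
have chooseK := choose_canon sourceS ck.
have srcK : source F (nth s c k |: Pre k) = Some s.
  by rewrite -(prefixS s kc) (source_prefix sourceS (ltn0Sn k)).
rewrite (prefixS s kc) => bP.
have FPk : Pre k \in F by apply: (prefix_in sourceS); rewrite k0 ltnW.
have step := lex_key_choose_step FPk FS (prefix_sub sourceS k)
  (source_prefix sourceS k0) srcK chooseK bP.
move: ik; rewrite ltnS leq_eqVlt => /orP [/eqP -> //|ik].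
exact: leq_trans (IH _ ik (ltnW kc) (choose_spec chooseK).1) step.
Qed.

Section AboveCompletion.
Variable j : nat.
Hypotheses (jc : j <= size c) (completeS : complete' F (Pre j) setT = S).

Lemma canon_key_le_outside i (Y : {set T}) y : 0 < i < j -> Y \in F -> Pre j \subset Y ->
  y \in Y -> y \notin S -> y |: Pre i \in F ->
  lex_key F (Pre i) (nth s c i) <= lex_key F (Pre i) y.
Proof.
move=> iij FY sjY yY yS FyP; have /andP [i0 ij] := iij.
have j0 : 0 < j := ltn_trans i0 ij.
have FPi : Pre i \in F by apply: (prefix_in sourceS); rewrite i0 (leq_trans (ltnW ij) jc).
have FPj : Pre j \in F by apply: (prefix_in sourceS); rewrite j0 jc.
have sij := prefix_mono F S (ltnW ij).
have [_ Fs _] := source_spec sourceS.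
have yPj : y \notin Pre j by apply: contra yS; apply: (subsetP (prefix_sub sourceS j)).
have yU : y \in plus F (Pre j) setT.
  rewrite in_plus yPj in_setT (addable_superset sij sjY) //.
  by apply/set0Pn; exists s; apply: source_in_prefix.
have [p chooseP] := choose_exists yU.
have [pU pmin] := choose_spec chooseP.
have pS : p \in plus F (Pre j) S.
  have pinS : p \in S by rewrite -completeS (mem_complete_choose chooseP).
  by move: pU; rewrite !in_plus pinS => /and3P [-> _ ->].
apply: leq_trans (canon_key_chain iij jc pS) _.
apply: (@leq_trans (lex_key F (Pre j) y)); first by rewrite -lex_leE pmin.
rewrite /lex_key /layX (source_prefix sourceS i0) (source_prefix sourceS j0).
rewrite leq_add2r leq_mul2r (lay_superset FPi FPj FY sij sjY) ?orbT //.
exact: source_in_prefix.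
Qed.

Lemma canon_key_min i (Y : {set T}) z : 0 < i < j -> Y \in F -> Pre j \subset Y ->
  z \in plus F (Pre i) Y -> lex_key F (Pre i) (nth s c i) <= lex_key F (Pre i) z.
Proof.
move=> iij FY sjY zP; have /andP [i0 ij] := iij.
move: (zP); rewrite in_plus => /and3P [zPi zY FzP].
have ic : 0 < i < size c by rewrite i0 (leq_trans ij jc).
have [zS|zS] := boolP (z \in S); last exact: (canon_key_le_outside iij FY sjY zY zS FzP).
have [_ cmin] := choose_spec (choose_canon sourceS ic).
by rewrite -lex_leE cmin // in_plus zPi zS FzP.
Qed.

Lemma choose_canon_superset (R : {set T}) i : R \in F -> Pre j \subset R -> 0 < i < j ->
  choose' F (Pre i) R = Some (nth s c i).
Proof.
move=> FR sjR iij; have /andP [i0 ij] := iij.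
have ic : 0 < i < size c by rewrite i0 (leq_trans ij jc).
apply: choose_eq => [|z zP]; last by rewrite lex_leE (canon_key_min iij FR sjR zP).
have [+ _] := choose_spec (choose_canon sourceS ic).
have ciR : nth s c i \in R by rewrite (subsetP sjR) // nth_canon_in_prefix //; case/andP: ic.
by rewrite !in_plus ciR => /and3P [-> _ ->].
Qed.

End AboveCompletion.

Lemma canon_pi_notin_parent J : J.+1 < size c -> complete' F (Pre J.+2) setT = S ->
  complete' F (Pre J.+1) setT != S -> nth s c J.+1 \notin complete' F (Pre J.+1) setT.
Proof.
move=> Jc completeS parent_neq; set P := complete' F _ _; set w := nth s c J.+1.
have chooseW : choose' F (Pre J.+1) S = Some w by apply: (choose_canon sourceS).
have prefixJ : Pre J.+2 = w |: Pre J.+1 := prefixS s Jc.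
have wU : w \in plus F (Pre J.+1) setT.
  by have [+ _] := choose_spec chooseW; rewrite !in_plus in_setT => /and3P [-> _ ->].
have [q chooseQ] := choose_exists wU.
have [qU qmin] := choose_spec chooseQ.
have qw : q != w.
  apply: contra parent_neq => /eqP qw.
  by rewrite -(complete_choose chooseQ) qw -prefixJ completeS.
apply/negP => wP.
have sJP : Pre J.+2 \subset P by rewrite prefixJ subUset sub1set wP subset_complete.
have FP : P \in F by apply: complete_in; apply: (prefix_in sourceS); exact: ltnW Jc.
have qP : q \in plus F (Pre J.+1) P.
  by move: qU; rewrite !in_plus (mem_complete_choose chooseQ) => /and3P [-> _ ->].
have wq := canon_key_min Jc completeS (i := J.+1) (ltnSn J.+1) FP sJP qP.
by move: qw; rewrite (lex_le_antisym (qmin w wU)) ?eqxx // lex_leE.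
Qed.

End CanonicalKeys.

End Exchange.

Theorem mainTheorem8 (n : nat) (F : {set {set 'I_n}}) :
  set0 \in F -> strongly_accessible F -> commutable F ->
  forall (P : {set 'I_n}) (w : 'I_n), maximal F P ->
  forall S : {set 'I_n}, maximal F S -> ~~ is_root F S ->
  parent' F S = P -> pi' F S = Some w ->
  w \notin P /\
  exists2 R, R \in restr F P w &
    exists s, [/\ s \in R :&: Zs F, s != w &
      S = complete' F (w |: completeT F [set s] R w) setT].
Proof.
move=> _ accessF commF P w _ S [FS _] nonroot <- {P} piw.
have [s sourceS] := pi'_source piw.
have [J [jE Jc wE completeS parent_neq]] := jidx_spec s nonroot piw.
clear piw; subst w.
rewrite /parent' /core' jE -[J.+2.-1]/J.+1.
have wP := canon_pi_notin_parent accessF commF FS sourceS Jc completeS parent_neq.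
set P := complete' F _ setT in wP *; set w := nth s _ J.+1 in wP *.
have prefixJ : Defs.prefix F S J.+2 = w |: Defs.prefix F S J.+1 := prefixS s Jc.
have sJP : Defs.prefix F S J.+2 \subset w |: P by rewrite prefixJ setUS // subset_complete.
have wJ : w \in Defs.prefix F S J.+2 by rewrite prefixJ setU11.
have [R restrR sJR] := restr_superset (prefix_in sourceS (i := J.+2) Jc) sJP wJ wP.
have FR : R \in F by move: restrR; rewrite inE => /andP [].
split => //; exists R => //; exists s; split.
- rewrite inE (subsetP sJR) ?(source_in_prefix sourceS) // inE.
  by have [] := source_spec sourceS.
- exact: (source_neq_canon sourceS (i := J.+1) Jc).
- rewrite (completeT_prefix sourceS (k := J.+1) Jc) => [|i iJ].
    by rewrite -prefixJ completeS.
  exact: (choose_canon_superset accessF commF FS sourceS Jc completeS FR sJR).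
Qed.
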